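(* Let $X,Y$ be finite nonempty sets. Every $A\in\{-1,1\}^{X\times Y}$ satisfies $\|A\|_{\gamma_2}\ge\sqrt{\operatorname{Ldim}(A)}$.
   Context: The $\gamma_2$ factorization norm of a matrix $A$ is $\|A\|_{\gamma_2}=\min_{UV=A}\|U\|_{\mathrm{row}}\|V\|_{\mathrm{col}}$, where the minimum is over all factorizations $A=UV$, $\|U\|_{\mathrm{row}}$ is the largest Euclidean norm of a row of $U$ and $\|V\|_{\mathrm{col}}$ the largest Euclidean norm of a column of $V$. A mistake tree of depth $d$ over $X$ is a complete binary tree of depth $d$ in which each internal node $\nu$ is labelled with $x(\nu)\in X$ and each edge $e$ to a child is labelled with a sign $\sigma(e)\in\{-1,1\}$ ($-1$ for the left child, $+1$ for the right child). $A\in\{-1,1\}^{X\times Y}$ shatters such a tree if for every root-to-leaf path $(\nu_1,\dots,\nu_{d+1})$ there is $y\in Y$ with $A(x(\nu_i),y)=\sigma(\nu_i\nu_{i+1})$ for all $i\in[d]$. The Littlestone dimension $\operatorname{Ldim}(A)$ is the largest $d$ for which $A$ shatters a mistake tree of depth $d$. *)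

From HB Require Import structures.
From mathcomp Require Import all_boot all_order all_algebra.
From mathcomp Require Import boolp classical_sets reals.
Set Implicit Arguments. Unset Strict Implicit. Unset Printing Implicit Defensive.
Import Order.TTheory GRing.Theory Num.Theory.
Local Open Scope ring_scope.
Local Open Scope classical_set_scope.

Section Defs.
Variables (R : realType) (X Y : finType).

Definition row_norm_max (k : nat) (U : X -> 'I_k -> R) : R :=
  \big[Num.max/0]_(x : X) Num.sqrt (\sum_(i < k) U x i ^+ 2).

Definition col_norm_max (k : nat) (V : 'I_k -> Y -> R) : R :=
  \big[Num.max/0]_(y : Y) Num.sqrt (\sum_(i < k) V i y ^+ 2).

Definition gamma2 (A : X -> Y -> R) : R :=
  inf [set r : R | exists (k : nat) (U : X -> 'I_k -> R) (V : 'I_k -> Y -> R),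
        (forall x y, A x y = \sum_(i < k) U x i * V i y) /\
        r = row_norm_max U * col_norm_max V].

(* Mistake trees of depth d: a node of depth i is the sequence (of length i)
   of edge signs on the path from the root (false = -1 = left child,
   true = +1 = right child); [lbl] labels the internal nodes
   (sequences of length < d) by elements of X. *)
Definition sign_of (b : bool) : R := if b then 1 else -1.

Definition shatters (A : X -> Y -> R) (d : nat) (lbl : seq bool -> X) : Prop :=
  forall s : seq bool, size s = d ->
    exists y : Y, forall i : nat, (i < d)%N ->
      A (lbl (take i s)) y = sign_of (nth false s i).

Definition shatters_depth (A : X -> Y -> R) (d : nat) : Prop :=
  exists lbl : seq bool -> X, shatters A d lbl.

(* Shattered depths d
   satisfy 2^d <= #|Y| (distinct leaves need distinct y's), so d <= #|Y|
   and the maximum over d <= #|Y| is the maximum over all d. *)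
Definition Ldim (A : X -> Y -> R) : nat :=
  \max_(d < #|Y|.+1 | `[< shatters_depth A d >]) d.

End Defs.

From HB Require Import structures.
From mathcomp Require Import all_boot all_order all_algebra.
From mathcomp Require Import boolp classical_sets reals.
From mathcomp Require Import ring lra.
Import Order.TTheory GRing.Theory Num.Theory.
Local Open Scope ring_scope.
Set Implicit Arguments. Unset Strict Implicit.

(* Let A = U V with rows u_x of U of norm <= r and columns v_y of V of norm
   <= c, and let a mistake tree of depth d be shattered. Walk down the tree
   from w_0 = 0: at a node labelled x choose the child sign s with
   s <u_x, w> <= 0 and move to w + s u_x. The cross term never helps, so
   |w_d|^2 <= d r^2. The leaf reached is realised by some y, which means
   <u_x, v_y> = s at every step, so <w_d, v_y> = d. Cauchy-Schwarz gives
   d <= sqrt d r c, i.e. sqrt d <= r c. *)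

Section DotProduct.
Variables (R : realFieldType) (k : nat).

Definition dotp (a b : 'I_k -> R) : R := \sum_i a i * b i.

Lemma dotpp_ge0 (a : 'I_k -> R) : 0 <= dotp a a.
Proof. by apply: sumr_ge0 => i _; rewrite -expr2 sqr_ge0. Qed.

Lemma dotpp_eq0 (a : 'I_k -> R) : dotp a a = 0 -> forall i, a i = 0.
Proof.
move=> a0 i; apply/eqP; rewrite -[_ == 0]orbb -mulf_eq0; apply/eqP.
by apply: (psumr_eq0P _ a0) => // j _; rewrite -expr2 sqr_ge0.
Qed.

Lemma dotp_sqr_le (a b : 'I_k -> R) : dotp a b ^+ 2 <= dotp a a * dotp b b.
Proof.
set B := dotp b b; set S := dotp a b; set Q := dotp a a.
have [B0|Bn0] := eqVneq B 0.
  have -> : S = 0 by apply: big1 => i _; rewrite (dotpp_eq0 B0) mulr0.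
  by rewrite B0 expr2 !mulr0.
have Bp : 0 < B by rewrite lt_def Bn0 dotpp_ge0.
(* expand 0 <= sum_i (B a_i - S b_i)^2 = B (B Q - S^2) *)
have E i : (B * a i - S * b i) ^+ 2 =
    B ^+ 2 * (a i * a i) - 2 * B * S * (a i * b i) + S ^+ 2 * (b i * b i).
  by ring.
have : 0 <= \sum_i (B * a i - S * b i) ^+ 2 by apply: sumr_ge0 => i _; apply: sqr_ge0.
rewrite (eq_bigr _ (fun i _ => E i)) !big_split /= sumrN -!mulr_sumr.
rewrite -/(dotp a a) -/(dotp a b) -/(dotp b b) -/Q -/S -/B.
by nra.
Qed.

End DotProduct.

Section NormBounds.
Variable R : realType.

Lemma bigmax_sqrt_ge0 (I : finType) (F : I -> R) :
  0 <= \big[Num.max/0]_i Num.sqrt (F i).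
Proof.
apply: (big_ind (fun x => 0 <= x)) => // [x y x0 y0|i _]; last exact: sqrtr_ge0.
by rewrite le_max x0.
Qed.

Lemma le_sqr_bigmax_sqrt (I : finType) (F : I -> R) i :
  0 <= F i -> F i <= (\big[Num.max/0]_j Num.sqrt (F j)) ^+ 2.
Proof.
move=> Fi0; rewrite -(sqr_sqrtr Fi0) lerXn2r ?nnegrE ?sqrtr_ge0 ?bigmax_sqrt_ge0 //.
exact: (le_bigmax _ (fun j => Num.sqrt (F j))).
Qed.

Lemma sqr_row_le_row_norm_max (X : finType) k (U : X -> 'I_k -> R) x :
  dotp (U x) (U x) <= row_norm_max U ^+ 2.
Proof.
rewrite /dotp (eq_bigr (fun i => U x i ^+ 2)) => [|i _]; last by rewrite expr2.
by apply: (le_sqr_bigmax_sqrt (F := fun x => \sum_i U x i ^+ 2)); apply: sumr_ge0 => i _; apply: sqr_ge0.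
Qed.

Lemma sqr_col_le_col_norm_max (Y : finType) k (V : 'I_k -> Y -> R) y :
  dotp (V^~ y) (V^~ y) <= col_norm_max V ^+ 2.
Proof.
rewrite /dotp (eq_bigr (fun i => V i y ^+ 2)) => [|i _]; last by rewrite expr2.
by apply: (le_sqr_bigmax_sqrt (F := fun y => \sum_i V i y ^+ 2)); apply: sumr_ge0 => i _; apply: sqr_ge0.
Qed.

Lemma sqrt_le_of_sqr_le (d t : R) : 0 <= t -> d ^+ 2 <= d * t ^+ 2 ->
  Num.sqrt d <= t.
Proof.
move=> t0 hd; have [d0|dp] := lerP d 0; first by rewrite ler0_sqrtr.
rewrite -(ger0_norm t0) -sqrtr_sqr ler_sqrt ?sqr_ge0 //.
by rewrite -(ler_pM2l dp) -expr2.
Qed.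

End NormBounds.

Lemma sign_of_sqr (R : realType) (b : bool) : sign_of R b * sign_of R b = 1.
Proof. by case: b; rewrite /sign_of ?mulr1 ?mulrNN ?mulr1. Qed.

Section BalancingWalk.
Variables (R : realType) (k : nat) (u : seq bool -> 'I_k -> R).

Fixpoint walk (n : nat) : seq bool * ('I_k -> R) :=
  if n is n'.+1 then
    let p := walk n' in
    let b := dotp (u p.1) p.2 <= 0 in
    (rcons p.1 b, fun i => p.2 i + sign_of R b * u p.1 i)
  else ([::], fun _ => 0).

Definition walk_sign (n : nat) : bool := dotp (u (walk n).1) (walk n).2 <= 0.

Lemma size_walk n : size (walk n).1 = n.
Proof. by elim: n => //= n IH; rewrite size_rcons IH. Qed.

Lemma take_walk n i : (i <= n)%N -> take i (walk n).1 = (walk i).1.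
Proof.
elim: n => [|n IH]; first by rewrite leqn0 => /eqP ->.
rewrite leq_eqVlt => /orP[/eqP ->|]; first by rewrite -{1}(size_walk n.+1) take_size.
by rewrite ltnS => hi /=; rewrite -cats1 takel_cat ?IH ?size_walk.
Qed.

Lemma nth_walk n i : (i < n)%N -> nth false (walk n).1 i = walk_sign i.
Proof.
elim: n => // n IH; rewrite ltnS leq_eqVlt => /orP[/eqP ->|hi] /=;
  by rewrite nth_rcons size_walk ?ltnn ?eqxx // hi IH.
Qed.

Lemma dotp_walk_le (r : R) : (forall s, dotp (u s) (u s) <= r ^+ 2) ->
  forall n, dotp (walk n).2 (walk n).2 <= n%:R * r ^+ 2.
Proof.
move=> ur; elim=> [|n IH] /=; first by rewrite mul0r /dotp big1 // => i _; rewrite mulr0.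
set w := (walk n).2; set v := u (walk n).1; set s := sign_of R _.
have E i : (w i + s * v i) * (w i + s * v i) =
    w i * w i + 2 * (s * (v i * w i)) + s * s * (v i * v i) by ring.
rewrite /dotp (eq_bigr _ (fun i _ => E i)) !big_split /= -!mulr_sumr.
rewrite -/(dotp w w) -/(dotp v w) -/(dotp v v) /s sign_of_sqr mul1r.
have step_le0 : sign_of R (dotp v w <= 0) * dotp v w <= 0.
  rewrite /sign_of; case: ifP => [vw_le0|/negbT]; first by rewrite mul1r.
  by rewrite -ltNge mulN1r oppr_le0 => /ltW.
have := ur (walk n).1; rewrite -/v mulrSr; nra.
Qed.

Lemma dotp_walk d (v : 'I_k -> R) :
  (forall i, (i < d)%N ->
     dotp (u (take i (walk d).1)) v = sign_of R (nth false (walk d).1 i)) ->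
  forall n, (n <= d)%N -> dotp (walk n).2 v = n%:R.
Proof.
move=> hv; elim=> [|n IH] hn /=; first by rewrite /dotp big1 // => i _; rewrite mul0r.
have := hv n hn; rewrite (take_walk (ltnW hn)) (nth_walk hn) => hvn.
rewrite /dotp; under eq_bigr => i _ do rewrite mulrDl -mulrA.
rewrite big_split /= -mulr_sumr -/(dotp _ v) -/(dotp _ v) hvn IH ?(ltnW hn) //.
by rewrite -/(walk_sign n) sign_of_sqr mulrSr.
Qed.

End BalancingWalk.

Lemma sqrt_le_row_col_of_shatters (R : realType) (X Y : finType)
    (A : X -> Y -> R) k (U : X -> 'I_k -> R) (V : 'I_k -> Y -> R) d lbl :
  (forall x y, A x y = \sum_i U x i * V i y) -> shatters A d lbl ->
  Num.sqrt d%:R <= row_norm_max U * col_norm_max V.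
Proof.
move=> hUV hsh; set w := walk (fun s => U (lbl s)) d.
have [y hy] := hsh w.1 (size_walk _ d).
have wv : dotp w.2 (V^~ y) = d%:R.
  by apply: dotp_walk (leqnn d) => i hi; rewrite -hy // hUV.
have w_le := dotp_walk_le (fun s => sqr_row_le_row_norm_max U (lbl s)) d.
have v_le := sqr_col_le_col_norm_max V y.
apply: sqrt_le_of_sqr_le; first by rewrite mulr_ge0 ?bigmax_sqrt_ge0.
rewrite -wv exprMn mulrA (le_trans (dotp_sqr_le _ _)) // wv.
by rewrite ler_pM ?dotpp_ge0.
Qed.

Lemma sqrt_Ldim_le (R : realType) (X Y : finType) (A : X -> Y -> R) (t : R) :
  0 <= t -> (forall d, shatters_depth A d -> Num.sqrt d%:R <= t) ->
  Num.sqrt (Ldim A)%:R <= t.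
Proof.
move=> t0 ht; apply: (big_ind (fun n : nat => Num.sqrt n%:R <= t)).
- by rewrite sqrtr0.
- by move=> a b ha hb; rewrite /Order.max /=; case: ltnP.
- by move=> d /asboolP; apply: ht.
Qed.

Lemma factorization_through_identity (R : realType) (X Y : finType)
    (A : X -> Y -> R) :
  forall x y, A x y = \sum_(i < #|Y|) A x (enum_val i) * (enum_val i == y)%:R.
Proof.
move=> x y; rewrite -(big_enum_val (fun z => A x z * (z == y)%:R)) /=.
rewrite (bigD1 y) //= eqxx mulr1 big1 ?addr0 // => z /negbTE ->.
by rewrite mulr0.
Qed.

Theorem proposition2p2 (R : realType) (X Y : finType)
  (hX : (0 < #|X|)%N) (hY : (0 < #|Y|)%N)
  (A : X -> Y -> R) (hA : forall x y, A x y = 1 \/ A x y = -1) :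
  Num.sqrt ((Ldim A)%:R) <= gamma2 A.
Proof.
apply: lb_le_inf.
  by do 4 eexists; split; first exact: factorization_through_identity.
move=> _ [k [U [V [hUV ->]]]].
apply: sqrt_Ldim_le; first by rewrite mulr_ge0 ?bigmax_sqrt_ge0.
by move=> d [lbl hsh]; exact: sqrt_le_row_col_of_shatters hUV hsh.
Qed.
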